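(* Let $\Lambda$ be a well-rounded lattice of rank $9$ in a $9$-dimensional Euclidean space $E$, and suppose there is an $8$-dimensional subspace $F\subset E$ such that $\Lambda\cap F$ is similar to the root lattice $\mathsf E_8$ and $\min(\Lambda\cap F)=\min\Lambda$. Then there is no lattice $L\subset E$ with $\min L=\min\Lambda$ and $\Lambda\subsetneq L$.
   Context: For a lattice $\Lambda$, $\min\Lambda=\min_{x\in\Lambda\setminus\{0\}}x\cdot x$; its minimal vectors are those attaining this minimum; $\Lambda$ is well-rounded if its minimal vectors span the ambient space. $\mathsf E_8=\mathsf D_8\cup(\tfrac12(1,\dots,1)+\mathsf D_8)$ where $\mathsf D_8=\{x\in\mathbb Z^8:\sum x_i \text{ even}\}$. *)

From HB Require Import structures.
From mathcomp Require Import all_boot all_order all_algebra.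
From mathcomp Require Import reals.
Set Implicit Arguments. Unset Strict Implicit. Unset Printing Implicit Defensive.
Import Order.TTheory GRing.Theory Num.Theory.
Local Open Scope ring_scope.

Definition dot (R : realType) (n : nat) (x y : 'rV[R]_n) : R := (x *m y^T) 0 0.

Definition is_lattice (R : realType) (n k : nat) (L : 'rV[R]_n -> Prop) : Prop :=
  exists B : 'M[R]_(k, n), row_free B /\
    forall x, L x <-> exists c : 'rV[int]_k, x = map_mx (fun z : int => z%:~R) c *m B.

Definition is_min (R : realType) (n : nat) (S : 'rV[R]_n -> Prop) (m : R) : Prop :=
  (exists x, S x /\ x != 0 /\ dot x x = m) /\
  (forall x, S x -> x != 0 -> m <= dot x x).

Definition minimal_vector (R : realType) (n : nat) (S : 'rV[R]_n -> Prop) (x : 'rV[R]_n) : Prop :=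
  S x /\ x != 0 /\ (forall y, S y -> y != 0 -> dot x x <= dot y y).

(* well-rounded: the minimal vectors span R^n, i.e. some n minimal vectors
   (rows of M) have full row space *)
Definition well_rounded (R : realType) (n : nat) (S : 'rV[R]_n -> Prop) : Prop :=
  exists M : 'M[R]_n, row_full M /\ forall i, minimal_vector S (row i M).

Definition D8 (R : realType) (x : 'rV[R]_8) : Prop :=
  exists c : 'rV[int]_8, x = map_mx (fun z : int => z%:~R) c /\
    exists s : int, \sum_(i < 8) c 0 i = 2 * s.

Definition E8 (R : realType) (x : 'rV[R]_8) : Prop :=
  D8 x \/ D8 (x - const_mx (1 / 2)).

(* S (a subset of R^9) is similar to E8: there is a similarity
   y |-> y *m A from R^8 into R^9 (A A^T = c I, c > 0) mapping E8 onto S *)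
Definition similar_to_E8 (R : realType) (S : 'rV[R]_9 -> Prop) : Prop :=
  exists (A : 'M[R]_(8, 9)) (c : R), 0 < c /\ A *m A^T = c%:M /\
    forall x, S x <-> exists y, E8 y /\ x = y *m A.

From HB Require Import structures.
From mathcomp Require Import all_boot all_order all_algebra.
From mathcomp Require Import reals.
From mathcomp Require Import zify ring lra.
Set Implicit Arguments. Unset Strict Implicit. Unset Printing Implicit Defensive.
Import Order.TTheory GRing.Theory Num.Theory.
Local Open Scope ring_scope.

(* Write Lambda cap F as the image of E8 under a similarity of ratio c, so
   that m = 2c (the minimum of E8 is 2) and every point of the span of
   Lambda cap F lies within squared distance c of it (the covering radius of
   E8 is 1).  By well-roundedness some minimal vector v of Lambda leaves that
   span.  A vector x of a lattice L containing Lambda with the same minimum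
   can be translated by an integer multiple of v, so that its component
   orthogonal to the span has squared length at most |v|^2/4 = m/4, and then
   by a vector of Lambda cap F, so that its component in the span has squared
   length at most c = m/2.  The translate lies in L and has squared length
   < m, hence is 0, so x lies in Lambda. *)

Lemma dotE (R : realType) n (x y : 'rV[R]_n) : dot x y = \sum_i x 0 i * y 0 i.
Proof. by rewrite /dot mxE; apply: eq_bigr => i _; rewrite mxE. Qed.

Lemma dotC (R : realType) n (x y : 'rV[R]_n) : dot x y = dot y x.
Proof. by rewrite !dotE; apply: eq_bigr => i _; rewrite mulrC. Qed.

Lemma dotDl (R : realType) n (x y z : 'rV[R]_n) : dot (x + y) z = dot x z + dot y z.
Proof. by rewrite !dotE -big_split; apply: eq_bigr => i _; rewrite mxE mulrDl. Qed.

Lemma dotDr (R : realType) n (x y z : 'rV[R]_n) : dot z (x + y) = dot z x + dot z y.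
Proof. by rewrite dotC dotDl !(dotC z). Qed.

Lemma dotZl (R : realType) n a (x z : 'rV[R]_n) : dot (a *: x) z = a * dot x z.
Proof. by rewrite !dotE mulr_sumr; apply: eq_bigr => i _; rewrite mxE mulrA. Qed.

Lemma dotZr (R : realType) n a (x z : 'rV[R]_n) : dot z (a *: x) = a * dot z x.
Proof. by rewrite dotC dotZl dotC. Qed.

Lemma dot_ge0 (R : realType) n (x : 'rV[R]_n) : 0 <= dot x x.
Proof. by rewrite dotE; apply: sumr_ge0 => i _; rewrite -expr2 sqr_ge0. Qed.

Lemma dot_eq0 (R : realType) n (x : 'rV[R]_n) : (dot x x == 0) = (x == 0).
Proof.
apply/idP/idP; last by move/eqP->; rewrite dotE big1 // => i _; rewrite mxE mul0r.
rewrite dotE psumr_eq0 => [/allP x0|i _]; last by rewrite -expr2 sqr_ge0.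
apply/eqP/matrixP => i j; rewrite mxE (ord1 i).
by have := x0 j (mem_index_enum j); rewrite mulf_eq0 orbb => /eqP.
Qed.

Section LatticeClosure.
Variables (R : realType) (n k : nat) (L : 'rV[R]_n -> Prop).
Hypothesis L_lattice : is_lattice k L.

Lemma latticeB x y : L x -> L y -> L (x - y).
Proof.
case: L_lattice => B [_ LE] /LE[a ->] /LE[b ->]; apply/LE; exists (a - b).
by rewrite -mulmxBl; congr (_ *m _); apply/matrixP => i j; rewrite !mxE intrB.
Qed.

Lemma latticeZ (z : int) x : L x -> L (z%:~R *: x).
Proof.
case: L_lattice => B [_ LE] /LE[a ->]; apply/LE; exists (z *: a).
by rewrite scalemxAl; congr (_ *m _); apply/matrixP => i j; rewrite !mxE intrM.
Qed.

Lemma latticeD x y : L x -> L y -> L (x + y).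
Proof. by move=> Lx /(latticeZ (-1))/(latticeB Lx); rewrite scaleN1r opprK. Qed.

End LatticeClosure.

Lemma int_even_or_odd (z : int) : exists s, z = 2 * s \/ z = 2 * s + 1.
Proof.
exists (z %/ 2)%Z; have := divz_eq z 2; have := modz_ge0 z (isT : (2:int) != 0).
have := ltz_pmod z (isT : (0:int) < 2); lia.
Qed.

Lemma sumr_sqr_parity (I : finType) (c : I -> int) :
  exists t, \sum_i c i * c i = \sum_i c i + 2 * t.
Proof.
elim/big_rec2: _ => [|i y1 y2 _ [t ->]]; first by exists 0; ring.
have [s [->|->]] := int_even_or_odd (c i).
  by exists (t + 2 * s * s - s); ring.
by exists (t + 2 * s * s + s); ring.
Qed.

Lemma E8_dot_ge2 (R : realType) (y : 'rV[R]_8) : E8 y -> y != 0 -> 2 <= dot y y.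
Proof.
case=> [[c [-> [s sum_c]]] | [c [half_c _]]] y_neq0.
  have [t sqr_c] := sumr_sqr_parity (c 0).
  set v := map_mx _ c in y_neq0 *.
  have dot_v : dot v v = (2 * s + 2 * t)%:~R.
    rewrite -sum_c -sqr_c dotE rmorph_sum; apply: eq_bigr => i _.
    by rewrite !mxE rmorphM.
  have : 0 < 2 * s + 2 * t by rewrite -(ltr0z R) -dot_v lt0r dot_eq0 y_neq0 dot_ge0.
  by rewrite dot_v (_ : 2 = (2 : int)%:~R :> R) // ler_int; lia.
have -> : y = map_mx (fun z : int => z%:~R) c + const_mx (1/2).
  by rewrite -half_c subrK.
rewrite dotE (@le_trans _ _ (\sum_(i < 8) 1/4)) //.
  by rewrite sumr_const card_ord -mulr_natr; lra.
apply: ler_sum => i _; rewrite !mxE.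
have : 0 <= c 0 i * (c 0 i + 1) by nia.
by rewrite -(ler_int R) intrM intrD => ?; lra.
Qed.

Lemma nearest_int_and_half_int (R : archiRealFieldType) (t : R) :
  exists a b : int, [/\ `|t - a%:~R| <= 1/2, `|t - 1/2 - b%:~R| <= 1/2
                       & `|t - a%:~R| + `|t - 1/2 - b%:~R| = 1/2].
Proof.
have /andP[fl_le lt_fl] := floor_itv t; rewrite intrD in lt_fl.
set b := Num.floor t in fl_le lt_fl *.
have [half_le | lt_half] := lerP (1/2) (t - b%:~R).
- exists (b + 1), b; rewrite intrD ler0_norm ?ger0_norm; [split|lra|lra]; lra.
- exists b, b; rewrite ger0_norm ?ler0_norm; [split|lra|lra]; lra.
Qed.

Lemma sumr_bump (R : nzRingType) (I : finType) (f : I -> R) j d :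
  \sum_i (f i + (i == j)%:R * d) = \sum_i f i + d.
Proof.
rewrite big_split /=; congr (_ + _).
by rewrite (bigD1 j) //= eqxx mul1r big1 ?addr0 // => i /negbTE->; rewrite mul0r.
Qed.

Lemma sumr_sqr_bump (R : comNzRingType) (I : finType) (f : I -> R) j d :
  \sum_i (f i - (i == j)%:R * d) ^+ 2 = \sum_i f i ^+ 2 - 2 * d * f j + d ^+ 2.
Proof.
rewrite (bigD1 j) //= [in RHS](bigD1 j) //= eqxx mul1r.
rewrite (eq_bigr (fun i => f i ^+ 2)); first by ring.
by move=> i /negbTE->; rewrite mul0r subr0.
Qed.

Lemma D8_int_row (R : realType) (c : 'I_8 -> int) s :
  \sum_i c i = 2 * s -> D8 (\row_i ((c i)%:~R : R)).
Proof.
move=> sum_c; exists (\row_i c i); split; first by apply/matrixP => i j; rewrite !mxE.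
by exists s; rewrite -sum_c; apply: eq_bigr => i _; rewrite mxE.
Qed.

Lemma D8_approx (R : realType) (z : 'rV[R]_8) (a : 'I_8 -> int) :
  (forall i, `|z 0 i - (a i)%:~R| <= 1/2) ->
  \sum_i `|z 0 i - (a i)%:~R| <= 2 ->
  exists y, D8 y /\ dot (z - y) (z - y) <= 1.
Proof.
pose r i := z 0 i - (a i)%:~R; rewrite -/(r _) => r_small.
rewrite (eq_bigr (fun i => `|r i|)) // => r_sum.
have [j _ r_max] := @arg_maxP _ R _ ord0 xpredT (fun i => `|r i|) isT.
have sum_sqr : \sum_i r i ^+ 2 <= `|r j| * \sum_i `|r i|.
  rewrite mulr_sumr; apply: ler_sum => i _.
  by rewrite -real_normK ?num_real // expr2 ler_wpM2r //; apply: r_max.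
have sum_ge0 : 0 <= \sum_i `|r i| by apply: sumr_ge0.
have [s [sum_a | sum_a]] := int_even_or_odd (\sum_i a i).
  exists (\row_i (a i)%:~R); split; first exact: D8_int_row sum_a.
  rewrite dotE (eq_bigr (fun i => r i ^+ 2)); last by move=> i _; rewrite !mxE.
  have := r_small j; nra.
(* Odd parity: round the coordinate with the largest residual the other way. *)
pose d : int := if 0 <= r j then 1 else -1.
have d_r : d%:~R * r j = `|r j|.
  rewrite /d; case: ifP => [/ger0_norm-> | /negbT]; first by rewrite mul1r.
  by rewrite -ltNge => /ltr0_norm->; rewrite mulN1r.
have d_sqr : (d%:~R : R) ^+ 2 = 1 by rewrite /d; case: ifP => _; rewrite ?sqrrN expr1n.
have [t sum_bump] : exists t, \sum_i (a i + (i == j)%:R * d) = 2 * t.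
  by rewrite sumr_bump sum_a /d; case: ifP => _; [exists (s + 1) | exists s]; ring.
exists (\row_i ((a i + (i == j)%:R * d)%:~R)); split; first exact: D8_int_row sum_bump.
rewrite dotE (eq_bigr (fun i => (r i - (i == j)%:R * d%:~R) ^+ 2)); last first.
  by move=> i _; rewrite !mxE intrD intrM rmorph_nat /r expr2; ring.
rewrite sumr_sqr_bump d_sqr -mulrA d_r; have := normr_ge0 (r j); nra.
Qed.

Lemma E8_covering (R : realType) (z : 'rV[R]_8) :
  exists y, E8 y /\ dot (z - y) (z - y) <= 1.
Proof.
have /fin_all_exists[ab near] : forall i : 'I_8, exists ab : int * int,
    [/\ `|z 0 i - ab.1%:~R| <= 1/2, `|z 0 i - 1/2 - ab.2%:~R| <= 1/2
      & `|z 0 i - ab.1%:~R| + `|z 0 i - 1/2 - ab.2%:~R| = 1/2].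
  by move=> i; have [a [b ?]] := nearest_int_and_half_int (z 0 i); exists (a, b).
have near_a i : `|z 0 i - (ab i).1%:~R| <= 1/2 by case: (near i).
have [sum_le2 | lt2_sum] := lerP (\sum_i `|z 0 i - (ab i).1%:~R|) 2.
  have [y [D8y near_y]] := D8_approx near_a sum_le2.
  by exists y; split; first left.
(* Otherwise round to the coset D8 + h instead: the residuals to the nearest
   integers and to the nearest half-integers add up to 4 in total. *)
pose h : 'rV[R]_8 := const_mx (1/2).
have half_sum_le2 : \sum_i `|(z - h) 0 i - (ab i).2%:~R| <= 2.
  have sum_4 : \sum_i (`|z 0 i - (ab i).1%:~R| + `|(z - h) 0 i - (ab i).2%:~R|) = 4.
    rewrite (eq_bigr (fun=> 1/2)) => [|i _]; last by rewrite !mxE; case: (near i).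
    by rewrite sumr_const card_ord -mulr_natr; lra.
  move: sum_4; rewrite big_split /=; lra.
have near_b i : `|(z - h) 0 i - (ab i).2%:~R| <= 1/2 by rewrite !mxE; case: (near i).
have [y [D8y near_y]] := D8_approx near_b half_sum_le2.
exists (y + h); split; first by right; rewrite addrK.
by rewrite opprD addrA -(addrAC z).
Qed.

Section OrthogonalProjection.
Variables (R : realType) (k n : nat) (A : 'M[R]_(k, n)) (c : R).
Hypotheses (c_gt0 : 0 < c) (AAT : A *m A^T = c%:M).

Definition orthoproj : 'M[R]_n := c^-1 *: (A^T *m A).
Local Notation P := orthoproj.
Local Notation Q := (1%:M - orthoproj).

Lemma mulmx_orthoproj : A *m P = A.
Proof.
rewrite /P -scalemxAr mulmxA AAT mul_scalar_mx scalerA.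
by rewrite mulVf ?scale1r ?gt_eqF.
Qed.

Lemma orthoproj_sym : P^T = P.
Proof. by rewrite /P linearZ /= trmx_mul trmxK. Qed.

Lemma orthoproj_idem : P *m P = P.
Proof. by rewrite {1}/P -scalemxAl -mulmxA mulmx_orthoproj. Qed.

Lemma dot_orthoproj (w : 'rV[R]_n) : dot w w = dot (w *m P) (w *m P) + dot (w *m Q) (w *m Q).
Proof.
have w_split : w = w *m P + w *m Q by rewrite mulmxBr mulmx1 addrC subrK.
have PQ0 : P *m Q^T = 0.
  by rewrite linearB /= trmx1 orthoproj_sym mulmxBr mulmx1 orthoproj_idem subrr.
have cross0 : dot (w *m P) (w *m Q) = 0.
  by rewrite /dot trmx_mul mulmxA -(mulmxA w) PQ0 mulmx0 mul0mx mxE.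
by rewrite {1 2}w_split dotDl !dotDr cross0 (dotC (w *m Q)) cross0 add0r addr0.
Qed.

Lemma dot_coproj_le (w : 'rV[R]_n) : dot (w *m Q) (w *m Q) <= dot w w.
Proof. by rewrite [leRHS]dot_orthoproj lerDr dot_ge0. Qed.

Lemma dot_mulmx_similarity (y : 'rV[R]_k) : dot (y *m A) (y *m A) = c * dot y y.
Proof. by rewrite /dot trmx_mul !mulmxA -(mulmxA y) AAT mul_mx_scalar -scalemxAl mxE. Qed.

Lemma rank_similarity : \rank A = k.
Proof.
apply/eqP; rewrite eqn_leq rank_leq_row /=.
apply: (mulmx1_min_rank (M := (c^-1)%:M) (N := A^T)).
by rewrite -mulmxA AAT -scalar_mxM mulVf ?gt_eqF.
Qed.

Lemma rank_orthoproj : \rank P = k.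
Proof.
apply/eqP; rewrite eqn_leq; apply/andP; split.
  by rewrite /P scalemxAl; apply: leq_trans (mxrankM_maxr _ _) (rank_leq_row _).
by rewrite -{1}rank_similarity -{1}mulmx_orthoproj mxrankM_maxr.
Qed.

Lemma rank_coproj : (\rank Q <= n - k)%N.
Proof.
have := mxrank_mul_min P Q.
by rewrite mulmxBr mulmx1 orthoproj_idem subrr mxrank0 rank_orthoproj; lia.
Qed.

Lemma coproj_neq0 : (k < n)%N -> Q != 0.
Proof.
move=> lt_kn; apply: contraTneq lt_kn => /eqP; rewrite subr_eq0 => /eqP P1.
by rewrite -rank_orthoproj -P1 mxrank1 ltnn.
Qed.

End OrthogonalProjection.

Lemma rank_le1_colinear (F : fieldType) n (Q : 'M[F]_n) (v w : 'rV[F]_n) :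
  (\rank Q <= 1)%N -> v *m Q != 0 -> exists s, w *m Q = s *: (v *m Q).
Proof.
move=> rankQ vQ_neq0; apply/sub_rVP; apply: submx_trans (submxMl w Q) _.
have vQ_sub : (v *m Q <= Q)%MS by apply: submxMl.
rewrite -(mxrank_leqif_sup vQ_sub).2 eqn_leq mxrankS //.
by apply: leq_trans rankQ _; rewrite lt0n mxrank_eq0.
Qed.

Lemma row_full_mulmx_neq0 (F : fieldType) n (M Q : 'M[F]_n) :
  row_full M -> Q != 0 -> exists i, row i M *m Q != 0.
Proof.
move=> M_full Q_neq0; case: (pickP (fun i => row i M *m Q != 0)) => [i ? | no_i].
  by exists i.
have MQ0 : M *m Q = 0.
  by apply/row_matrixP => i; rewrite row_mul row0; apply/eqP/negbFE/no_i.
move: M_full Q_neq0; rewrite row_full_unit => M_unit.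
by rewrite -(mulKmx M_unit Q) MQ0 mulmx0 eqxx.
Qed.

Lemma E8_line_approx (R : realType) (A : 'M[R]_(8, 9)) (c : R) (v w : 'rV[R]_9) :
  0 < c -> A *m A^T = c%:M ->
  let Q := 1%:M - orthoproj A c in v *m Q != 0 ->
  exists (y : 'rV[R]_8) (t : int), E8 y /\
    dot (w - y *m A - t%:~R *: v) (w - y *m A - t%:~R *: v)
      <= c + dot (v *m Q) (v *m Q) / 4.
Proof.
move=> c_gt0 AAT Q vQ_neq0.
have rankQ : (\rank Q <= 1)%N by apply: leq_trans (rank_coproj c_gt0 AAT) _.
have [s wQ] := rank_le1_colinear w rankQ vQ_neq0.
have [t [_ [st_small _ _]]] := nearest_int_and_half_int s.
pose z := c^-1 *: ((w - t%:~R *: v) *m A^T).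
have [y [E8y near_y]] := E8_covering z.
exists y, t; split => //.
set x := w - y *m A - t%:~R *: v.
have xP : x *m orthoproj A c = (z - y) *m A.
  rewrite /x addrAC !mulmxBl -mulmxA mulmx_orthoproj // -mulmxBl; congr (_ - _).
  by rewrite /z /orthoproj -scalemxAr -scalemxAl mulmxA.
have xQ : x *m Q = (s - t%:~R) *: (v *m Q).
  have yAQ0 : y *m A *m Q = 0.
    by rewrite /Q mulmxBr mulmx1 -mulmxA mulmx_orthoproj // subrr.
  by rewrite /x !mulmxBl wQ yAQ0 subr0 -scalemxAl scalerBl.
have st_sqr : (s - t%:~R) ^+ 2 <= 1/4.
  by rewrite -real_normK ?num_real //; have := normr_ge0 (s - t%:~R); nra.
rewrite (dot_orthoproj c_gt0 AAT) -/Q xP xQ (dot_mulmx_similarity AAT) dotZl dotZr.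
have := dot_ge0 (v *m Q); nra.
Qed.

Lemma E8_similar_min (R : realType) (S : 'rV[R]_9 -> Prop) (A : 'M[R]_(8, 9)) c m :
  0 < c -> A *m A^T = c%:M -> (forall x, S x <-> exists y, E8 y /\ x = y *m A) ->
  is_min S m -> 2 * c <= m.
Proof.
move=> c_gt0 AAT S_E8 [[x [/S_E8[y [E8y ->]] [yA_neq0 <-]]] _].
have y_neq0 : y != 0 by apply: contraNneq yA_neq0 => ->; rewrite mul0mx.
by rewrite (dot_mulmx_similarity AAT) [2 * c]mulrC ler_pM2l // E8_dot_ge2.
Qed.

(* The subspace F only cuts out Lambda cap F; the 8-dimensional span needed
   below is that of the similar copy of E8. *)
Theorem lemma3p3 (R : realType) (Lam : 'rV[R]_9 -> Prop) (F : 'M[R]_9) (m : R) :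
  is_lattice 9 Lam -> well_rounded Lam ->
  \rank F = 8%N ->
  similar_to_E8 (fun x => Lam x /\ (x <= F)%MS) ->
  is_min (fun x => Lam x /\ (x <= F)%MS) m -> is_min Lam m ->
  ~ exists (k : nat) (L : 'rV[R]_9 -> Prop),
      is_lattice k L /\ is_min L m /\
      (forall x, Lam x -> L x) /\ (exists x, L x /\ ~ Lam x).
Proof.
move=> Lam_lat [M [M_full M_min]] _ [A [c [c_gt0 [AAT LamF_E8]]]] LamF_min
  [[x1 [Lam_x1 [x1_neq0 x1_m]]] _] [k [L [L_lat [[_ L_min] [Lam_L [x [Lx notLam_x]]]]]]].
have m_ge := E8_similar_min c_gt0 AAT LamF_E8 LamF_min.
have [i vQ_neq0] := row_full_mulmx_neq0 M_full (coproj_neq0 c_gt0 AAT (isT : 8 < 9)%N).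
have [Lam_v [_ v_min]] := M_min i; set v := row i M in vQ_neq0 Lam_v v_min.
have vQ_le : dot (v *m (1%:M - orthoproj A c)) (v *m (1%:M - orthoproj A c)) <= m.
  by rewrite -x1_m; apply: le_trans (dot_coproj_le c_gt0 AAT v) (v_min _ Lam_x1 x1_neq0).
have [y [t [E8y short]]] := E8_line_approx x c_gt0 AAT vQ_neq0.
have Lam_yA : Lam (y *m A) by apply: (proj1 ((LamF_E8 _).2 _)); exists y.
have Lam_tv : Lam (t%:~R *: v) := latticeZ Lam_lat t Lam_v.
have L_short : L (x - y *m A - t%:~R *: v).
  exact (latticeB L_lat (latticeB L_lat Lx (Lam_L _ Lam_yA)) (Lam_L _ Lam_tv)).
have short0 : x - y *m A - t%:~R *: v = 0.
  apply/eqP/negPn/negP => short_neq0.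
  by have := L_min _ L_short short_neq0; lra.
apply: notLam_x; move/eqP: short0; rewrite -addrA -opprD subr_eq0 => /eqP->.
exact (latticeD Lam_lat Lam_yA Lam_tv).
Qed.
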